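(* Let $G$ be a tree with vertices $1,2,\ldots,n$ and edges $e_1,\ldots,e_{n-1}$, and let $M$ be its $n\times(n-1)$ vertex-edge incidence matrix. Define the $(n-1)\times n$ matrix $H=[h_{i,j}]$ (rows indexed by edges, columns by vertices) by $$h_{i,j}=\frac{(-1)^{d(e_i,j)}}{n}\begin{cases}|G_T(e_i)| & \text{if } j\in G_H(e_i),\\ |G_H(e_i)| & \text{if } j\in G_T(e_i).\end{cases}$$ Then $HM=I_{n-1}$.
   Context: Each edge is written $e_i=\{l_i,m_i\}$ with $l_i<m_i$. The incidence matrix $M$ has $(i,j)$-entry $1$ if vertex $i$ is incident with edge $e_j$ and $0$ otherwise. $d(u,v)$ denotes the usual graph distance between vertices; for a vertex $j$ and edge $e_i=\{l_i,m_i\}$, $d(j,e_i)=d(e_i,j):=\min\{d(j,l_i),d(j,m_i)\}$. The head component $G_H(e_i)$ is the connected component of $G\setminus e_i$ containing $m_i$; the tail component $G_T(e_i)$ is the component of $G\setminus e_i$ containing $l_i$. $|X|$ denotes the number of vertices of a graph $X$. *)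

From mathcomp Require Import all_boot all_order all_algebra.
Set Implicit Arguments. Unset Strict Implicit. Unset Printing Implicit Defensive.
Import Order.TTheory GRing.Theory Num.Theory.

(* A graph on vertex set 'I_N given by an edge list e : 'I_k -> 'I_N * 'I_N,
   edge e_i = {l_i, m_i} with l_i = (e i).1 < m_i = (e i).2. *)
Section Graph.
Variables (N k : nat) (e : 'I_k -> 'I_N * 'I_N).

Definition edge_joins (i : 'I_k) (u v : 'I_N) : bool :=
  ((u == (e i).1) && (v == (e i).2)) || ((u == (e i).2) && (v == (e i).1)).

Definition adj : rel 'I_N := fun u v => [exists i, edge_joins i u v].

Definition adj_del (j : 'I_k) : rel 'I_N :=
  fun u v => [exists i, (i != j) && edge_joins i u v].

Fixpoint reach (r : nat) (u v : 'I_N) : bool :=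
  if r is r'.+1 then reach r' u v || [exists w, reach r' u w && adj w v]
  else u == v.

(* graph distance d(u,v): least r with reach r u v (finite graph, connected
   case: this is < N) *)
Definition dist (u v : 'I_N) : nat := find (fun r => reach r u v) (iota 0 N).

Definition dist_ve (j : 'I_N) (i : 'I_k) : nat :=
  minn (dist j (e i).1) (dist j (e i).2).

Definition head_comp (i : 'I_k) : {set 'I_N} :=
  [set v | connect (adj_del i) (e i).2 v].
Definition tail_comp (i : 'I_k) : {set 'I_N} :=
  [set v | connect (adj_del i) (e i).1 v].

(* (G, e) is a tree: edges are written with l_i < m_i, they are pairwise
   distinct, the graph is connected, and there are N-1 of them (k.+1 = N,
   enforced in the theorem by the types). *)
Definition is_tree_edges : Prop :=
  [/\ forall i, (e i).1 < (e i).2, injective e & forall u v, connect adj u v].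

Local Open Scope ring_scope.
Definition incidence (R : pzRingType) : 'M[R]_(N, k) :=
  \matrix_(v, j) (nat_of_bool ((v == (e j).1) || (v == (e j).2)))%:R.

Definition Hmat (R : numFieldType) : 'M[R]_(k, N) :=
  \matrix_(i, j)
    ((-1) ^+ dist_ve j i / (N%:R : R) *
     (if j \in head_comp i then #|tail_comp i|%:R
      else if j \in tail_comp i then #|head_comp i|%:R else 0)).
End Graph.

From mathcomp Require Import all_boot all_order all_algebra zify.
Set Implicit Arguments. Unset Strict Implicit. Unset Printing Implicit Defensive.
Import GRing.Theory Num.Theory.

(* Column j of M has its two ones at the ends l_j, m_j of e_j, so (HM)_ij is
   h_(i,l_j) + h_(i,m_j).  For i = j these are |G_H(e_i)|/n and |G_T(e_i)|/n,
   which sum to 1 because the two components partition the vertices.  For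
   i <> j, e_j is an edge of G \ e_i, so l_j and m_j lie in one component, on
   which h_(i,.) is (-1)^d(., r) times a constant, r being the end of e_i in
   that component; in a tree d(l_j, r) and d(m_j, r) differ by one, so the two
   terms cancel.  Deleting an edge of a tree disconnects it because a connected
   graph on N vertices has at least N - 1 edges, and a walk leaving a component
   of G \ e_i must cross e_i, which makes distances grow by one across e_i. *)

Section BoundedReach.
Variables (T : finType) (g : rel T).

Fixpoint reachn (r : nat) (u v : T) : bool :=
  if r is r'.+1 then reachn r' u v || [exists w, reachn r' u w && g w v]
  else u == v.

(* Equals #|T| when v is not reachable from u. *)
Definition gdist (u v : T) : nat := find (fun r => reachn r u v) (iota 0 #|T|).

Lemma reachn_mono m r u v : m <= r -> reachn m u v -> reachn r u v.
Proof.
elim: r => [|r IH]; first by rewrite leqn0 => /eqP ->.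
by rewrite leq_eqVlt => /orP [/eqP -> //| /IH h /h /= ->].
Qed.

Lemma reachn_path x p : path g x p -> reachn (size p) x (last x p).
Proof.
elim/last_ind: p => [|p y IH] //=.
rewrite rcons_path last_rcons size_rcons => /andP [gp gy] /=.
by apply/orP; right; apply/existsP; exists (last x p); rewrite IH.
Qed.

Lemma connect_reachn u v : connect g u v -> exists2 r, r < #|T| & reachn r u v.
Proof.
case/connectP => p gp ->; have [q gq uq _] := shortenP gp.
exists (size q); last exact: reachn_path.
by move/card_uniqP: uq => /= <-; apply: max_card.
Qed.

Lemma gdist_min r u v : reachn r u v -> gdist u v <= r.
Proof.
move=> h; case: (ltnP r #|T|) => [ltrT | leTr].
  by rewrite leqNgt; apply/negP => /(before_find 0); rewrite nth_iota // h.
by apply: leq_trans leTr; rewrite -[X in _ <= X](size_iota 0 #|T|) find_size.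
Qed.

Lemma gdist_reachn u v : connect g u v -> reachn (gdist u v) u v.
Proof.
case/connect_reachn => r ltrT h.
have hasr : has (fun r => reachn r u v) (iota 0 #|T|).
  by apply/hasP; exists r; rewrite ?mem_iota.
have := nth_find 0 hasr; rewrite nth_iota ?add0n //.
by rewrite -[X in _ < X](size_iota 0 #|T|) -has_find.
Qed.

Lemma gdist_refl u : gdist u u = 0.
Proof. by apply/eqP; rewrite -leqn0 (@gdist_min 0) /=. Qed.

Lemma gdist_step u v w : connect g u v -> g v w -> gdist u w <= (gdist u v).+1.
Proof.
move=> uv gvw; apply: gdist_min => /=.
by apply/orP; right; apply/existsP; exists v; rewrite gdist_reachn.
Qed.

Lemma gdist_pred u v :
  connect g u v -> u != v -> exists2 w, g w v & gdist u w < gdist u v.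
Proof.
move=> uv; have := gdist_reachn uv.
case: (gdist u v) (fun r => @gdist_min r u v) => [|d] min_d /=; first by move=> ->.
case/orP => [/min_d | /existsP [w /andP [uw gwv]]]; first by rewrite ltnn.
by exists w; rewrite // ltnS gdist_min.
Qed.

Section Exit.
Variables (S : {pred T}) (x : T).
Hypothesis exit_at_x : forall a b, a \in S -> g a b -> b \notin S -> a = x.

Lemma reachn_exit r u v :
  u \in S -> reachn r u v -> v \notin S -> reachn r.-1 u x.
Proof.
move=> uS; elim: r v => [|r IH] v /=; first by move/eqP <-; rewrite uS.
case/orP => [uv vS | /existsP [w /andP [uw gwv]] vS].
  by apply: reachn_mono (IH _ uv vS); case: r {IH uv}.
have [wS | wS] := boolP (w \in S); first by rewrite -(exit_at_x wS gwv vS).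
by apply: reachn_mono (IH _ uw wS); case: r {IH uw}.
Qed.

Lemma gdist_exit u y :
  g x y -> y \notin S -> u \in S -> connect g u x -> gdist u y = (gdist u x).+1.
Proof.
move=> gxy yS uS ux; have uy := connect_trans ux (connect1 gxy).
apply/eqP; rewrite eqn_leq gdist_step //=.
have := reachn_exit uS (gdist_reachn uy) yS.
case E: (gdist u y) => [|d] /=; last exact: gdist_min.
by have := gdist_reachn uy; rewrite E /= => /eqP uy_eq; rewrite -uy_eq uS in yS.
Qed.

End Exit.

Hypothesis g_sym : symmetric g.

Lemma reachn_cons r u w v : g u w -> reachn r w v -> reachn r.+1 u v.
Proof.
move=> guw; elim: r v => [|r IH] v.
  by move/eqP <-; apply/orP; right; apply/existsP; exists u; rewrite eqxx.
case/orP => [/IH | /existsP [y /andP [wy gyv]]]; first exact: reachn_mono.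
by apply/orP; right; apply/existsP; exists y; rewrite gyv andbT; apply: IH.
Qed.

Lemma reachn_sym r u v : reachn r u v -> reachn r v u.
Proof.
elim: r u v => [|r IH] u v; first by rewrite /= eq_sym.
case/orP => [/IH | /existsP [w /andP [uw gwv]]]; first exact: reachn_mono.
by apply: (@reachn_cons r v w); [rewrite g_sym | apply: IH].
Qed.

Lemma gdist_sym u v : connect g u v -> gdist u v = gdist v u.
Proof.
move=> uv; have vu : connect g v u by rewrite (sym_connect_sym g_sym).
by apply/eqP; rewrite eqn_leq !gdist_min //; apply: reachn_sym; apply: gdist_reachn.
Qed.

End BoundedReach.

Section Graph.
Variables (N k : nat) (e : 'I_k -> 'I_N * 'I_N).

Definition edge_rel (P : pred 'I_k) : rel 'I_N :=
  fun u v => [exists i, P i && edge_joins e i u v].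

Lemma edge_joins_sym i u v : edge_joins e i u v = edge_joins e i v u.
Proof. by rewrite /edge_joins orbC; congr (_ || _); rewrite andbC. Qed.

Lemma adj_sym : symmetric (adj e).
Proof. by move=> u v; apply: eq_existsb => i; rewrite edge_joins_sym. Qed.

Lemma adj_del_sym i : symmetric (adj_del e i).
Proof. by move=> u v; apply: eq_existsb => f; rewrite edge_joins_sym. Qed.

Lemma dist_gdist u v : dist e u v = gdist (adj e) u v.
Proof.
rewrite /dist /gdist card_ord; apply: eq_find => r.
by elim: r v => [|r IH] v //=; under eq_existsb do rewrite IH; rewrite IH.
Qed.

Lemma mul_incidence (R : pzRingType) m (A : 'M[R]_(m, N)) a j :
  (e j).1 != (e j).2 -> ((A *m incidence e R) a j = A a (e j).1 + A a (e j).2)%R.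
Proof.
move=> lm; rewrite mxE (bigD1 (e j).1) // (bigD1 (e j).2) 1?eq_sym //=.
rewrite big1 => [|v /andP [vl vm]]; last by rewrite mxE (negbTE vl) (negbTE vm) mulr0.
by rewrite !mxE eqxx (negbTE lm) eqxx orbT !mulr1 addr0.
Qed.

(* Each vertex other than the root is sent to the edge through which it is
   reached from a vertex strictly closer to the root; this map is injective. *)
Lemma card_spanning_edges (P : pred 'I_k) root :
  (forall v, connect (edge_rel P) root v) -> N.-1 <= #|P|.
Proof.
move=> span; pose h := gdist (edge_rel P) root.
pose parent v f := P f && [exists w, edge_joins e f w v && (h w < h v)].
have parentP v : v != root -> exists f, parent v f.
  rewrite eq_sym => nv; have [w /existsP [f /andP [Pf fwv]] hw] := gdist_pred (span v) nv.
  by exists f; rewrite /parent Pf; apply/existsP; exists w; rewrite fwv.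
have [v0 nv0 | all_root] := pickP (predC1 root); last first.
  by rewrite -[N]card_ord -(cardC1 root) (eq_card0 all_root).
have [f0 _] := parentP v0 nv0.
pose phi v := odflt f0 [pick f | parent v f].
have phiP v : v != root -> parent v (phi v).
  move=> nv; rewrite /phi; case: pickP => [f -> //| none].
  by have [f] := parentP v nv; rewrite none.
have phi_inj : {in [set~ root] &, injective phi}.
  move=> v v'; rewrite !in_setC1 => /phiP /andP [_ /existsP [w /andP [fwv hw]]].
  move=> /phiP /andP [_ /existsP [w' /andP [fwv' hw']]] phivv'.
  move: fwv fwv' hw hw'; rewrite -phivv' /edge_joins; move: (phi v) => f.
  by case/orP => /andP [/eqP -> /eqP ->]; case/orP => /andP [/eqP -> /eqP ->] //; lia.
have phi_sub : phi @: [set~ root] \subset P.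
  by apply/subsetP => _ /imsetP [v /[!in_setC1] /phiP /andP [Pf _] ->].
by have := subset_leq_card phi_sub; rewrite card_in_imset // cardsC1 card_ord.
Qed.

End Graph.

Local Open Scope ring_scope.

Lemma addr_sign_consecutive (R : pzRingType) (a b : nat) :
  (a = b.+1 \/ b = a.+1) -> (-1) ^+ a + (-1) ^+ b = 0 :> R.
Proof. by case=> ->; rewrite exprS mulN1r ?addNr ?addrN. Qed.

Section Tree.
Variables (n : nat) (e : 'I_n -> 'I_n.+1 * 'I_n.+1).
Hypothesis tree : is_tree_edges e.

Lemma tree_connected u v : connect (adj e) u v.
Proof. by case: tree. Qed.

Lemma tree_ends_neq i : (e i).1 != (e i).2.
Proof. by case: tree => lt _ _; rewrite neq_ltn lt. Qed.

Lemma adj_ends i : adj e (e i).1 (e i).2.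
Proof. by apply/existsP; exists i; rewrite /edge_joins !eqxx. Qed.

Lemma dist_refl u : dist e u u = 0%N.
Proof. by rewrite dist_gdist gdist_refl. Qed.

Lemma dist_sym u v : dist e u v = dist e v u.
Proof. by rewrite !dist_gdist gdist_sym //; [apply: adj_sym | apply: tree_connected]. Qed.

Lemma tail_comp_fst i : (e i).1 \in tail_comp e i.
Proof. by rewrite inE. Qed.

Lemma head_comp_snd i : (e i).2 \in head_comp e i.
Proof. by rewrite inE. Qed.

Lemma head_tail_cover i v : (v \in head_comp e i) || (v \in tail_comp e i).
Proof.
have closedU : closed (adj e) [predU head_comp e i & tail_comp e i].
  apply: intro_closed; first exact/sym_connect_sym/adj_sym.
  move=> a b /existsP [f]; have [-> fab | ne fab] := eqVneq f i.
    by case/orP: fab => /andP [_ /eqP ->]; rewrite !inE connect0 ?orbT.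
  have ab : adj_del e i a b by apply/existsP; exists f; rewrite ne.
  by rewrite !inE => /orP [] c; rewrite (connect_trans c (connect1 ab)) ?orbT.
have := closed_connect closedU (tree_connected (e i).1 v).
by rewrite !inE connect0 orbT => <-.
Qed.

Lemma ends_disconnected i : ~~ connect (adj_del e i) (e i).1 (e i).2.
Proof.
apply/negP => lm.
have span v : connect (edge_rel e (predC1 i)) (e i).1 v.
  by case/orP: (head_tail_cover i v); rewrite inE // => /(connect_trans lm).
have := card_spanning_edges span; rewrite cardC1 !card_ord.
by have := ltn_ord i; lia.
Qed.

Lemma head_tail_disjoint i v : v \in head_comp e i -> v \notin tail_comp e i.
Proof.
rewrite !inE => mv; apply/negP => lv; apply: (negP (ends_disconnected i)).
by apply: connect_trans lv _; rewrite (sym_connect_sym (adj_del_sym e i)).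
Qed.

Lemma card_head_tail i : (#|head_comp e i| + #|tail_comp e i| = n.+1)%N.
Proof.
rewrite -cardsUI.
have -> : head_comp e i :|: tail_comp e i = setT.
  by apply/setP => v; rewrite in_setU in_setT head_tail_cover.
have -> : head_comp e i :&: tail_comp e i = set0.
  apply/setP => v; rewrite in_setI in_set0.
  by apply/negP => /andP [/head_tail_disjoint /negPf ->].
by rewrite cardsT cards0 addn0 card_ord.
Qed.

Lemma del_comp_exit i x a b :
  x \in [:: (e i).1; (e i).2] ->
  a \in [set v | connect (adj_del e i) x v] -> adj e a b ->
  b \notin [set v | connect (adj_del e i) x v] -> a = x.
Proof.
rewrite !inE => x_end xa /existsP [f fab] xb.
have [fi | ne] := eqVneq f i; last first.
  have ab : adj_del e i a b by apply/existsP; exists f; rewrite ne.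
  by rewrite (connect_trans xa (connect1 ab)) in xb.
move: fab x_end xa xb; rewrite fi /edge_joins.
by case/orP => /andP [/eqP -> /eqP ->] /orP [] /eqP ->; rewrite connect0.
Qed.

Lemma dist_tail_head i v :
  v \in tail_comp e i -> dist e v (e i).2 = (dist e v (e i).1).+1.
Proof.
move=> vt; rewrite !dist_gdist; apply: (gdist_exit (S := tail_comp e i)) => //.
- by move=> a b; apply: del_comp_exit; rewrite mem_head.
- exact: adj_ends.
- exact/head_tail_disjoint/head_comp_snd.
- exact: tree_connected.
Qed.

Lemma dist_head_tail i v :
  v \in head_comp e i -> dist e v (e i).1 = (dist e v (e i).2).+1.
Proof.
move=> vh; rewrite !dist_gdist; apply: (gdist_exit (S := head_comp e i)) => //.
- by move=> a b; apply: del_comp_exit; rewrite !inE eqxx orbT.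
- by rewrite adj_sym adj_ends.
- by apply/negP => /head_tail_disjoint; rewrite tail_comp_fst.
- exact: tree_connected.
Qed.

Lemma dist_edge_ends j x :
  dist e (e j).1 x = (dist e (e j).2 x).+1 \/ dist e (e j).2 x = (dist e (e j).1 x).+1.
Proof.
rewrite !(dist_sym _ x).
by case/orP: (head_tail_cover j x) => [/dist_head_tail | /dist_tail_head] ->; [left | right].
Qed.

Variable R : numFieldType.

Lemma Hmat_head i v : v \in head_comp e i ->
  Hmat e R i v = (-1) ^+ dist e v (e i).2 / n.+1%:R * #|tail_comp e i|%:R.
Proof.
by move=> vh; rewrite mxE vh /dist_ve (dist_head_tail vh) (minn_idPr (leqnSn _)).
Qed.

Lemma Hmat_tail i v : v \in tail_comp e i ->
  Hmat e R i v = (-1) ^+ dist e v (e i).1 / n.+1%:R * #|head_comp e i|%:R.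
Proof.
move=> vt; have vh : v \notin head_comp e i.
  by apply/negP => /head_tail_disjoint; rewrite vt.
by rewrite mxE (negbTE vh) vt /dist_ve (dist_tail_head vt) (minn_idPl (leqnSn _)).
Qed.

Lemma Hmat_diag i : Hmat e R i (e i).1 + Hmat e R i (e i).2 = 1.
Proof.
rewrite Hmat_tail ?tail_comp_fst // Hmat_head ?head_comp_snd // !dist_refl.
by rewrite !expr0 !mul1r -mulrDr -natrD card_head_tail mulVf ?pnatr_eq0.
Qed.

Lemma Hmat_edge_cancel i j : i != j -> Hmat e R i (e j).1 + Hmat e R i (e j).2 = 0.
Proof.
move=> ij; have del_j : adj_del e i (e j).1 (e j).2.
  by apply/existsP; exists j; rewrite eq_sym ij /edge_joins !eqxx.
have [jh | jt] := orP (head_tail_cover i (e j).1).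
  have jh2 : (e j).2 \in head_comp e i.
    by move: jh; rewrite !inE => /connect_trans; apply; apply: connect1.
  rewrite !Hmat_head // -!mulrA -mulrDl addr_sign_consecutive ?mul0r //.
  exact: dist_edge_ends.
have jt2 : (e j).2 \in tail_comp e i.
  by move: jt; rewrite !inE => /connect_trans; apply; apply: connect1.
rewrite !Hmat_tail // -!mulrA -mulrDl addr_sign_consecutive ?mul0r //.
exact: dist_edge_ends.
Qed.

End Tree.

(* Vertices 1..n of the paper are 'I_n.+1 (so the paper's n is n.+1 here),
   edges e_1..e_{n-1} are indexed by 'I_n. *)
Theorem mainTheorem1 (R : numFieldType) (n : nat)
    (e : 'I_n -> 'I_n.+1 * 'I_n.+1) :
  is_tree_edges e ->
  Hmat e R *m incidence e R = 1%:M.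
Proof.
move=> tree; apply/matrixP => i j.
rewrite mul_incidence ?(tree_ends_neq tree) // [RHS]mxE.
have [<- | ij] := eqVneq i j; first exact: Hmat_diag.
exact: Hmat_edge_cancel.
Qed.
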